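(* Assume there exist $\psi\in\mathcal B_{b,\gg}(\chi)$, $t_0>0$, $a>0$ and a submarkovian kernel $\tilde P$ with $\psi(x)\Lambda(dx)P_{t_0}(x,dy)=a\psi(y)\Lambda(dy)\tilde P(y,dx)$ as measures on $\chi\times\chi$. Let $\pi$ be a QSD of $(X_t)_{0\le t<\tau_\partial}$ with $\pi\ll\Lambda$, and suppose $(P_t)_{t\ge0}$ has a non-negative $L^1(\pi)$-right eigenfunction $\phi$ (i.e. $P_t\phi=\lambda(\pi)^t\phi$ $\pi$-a.e. for all $t$) with $\pi(\phi)=1$. Suppose further that $$\Big\|\frac{d\mathcal L_\mu(X_t\mid\tau_\partial>t)}{d\pi}-1\Big\|_{L^\infty(\pi)}\to0\ \ (t\to\infty)\quad\text{whenever }\mu\in\mathcal P_\infty(\pi)\text{ and }\mu(\phi)>0.$$ Then $\pi\in\mathcal P_\infty(\Lambda)$, i.e. $\pi$ has an essentially bounded density with respect to $\Lambda$.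
   Context: $\chi$ is a metric space with Borel $\sigma$-algebra and a distinguished $\sigma$-finite Borel measure $\Lambda$ of full support. $(X_t)_{0\le t<\tau_\partial}$ is a killed Markov process on $\chi$ with absorption time $\tau_\partial$ and submarkovian semigroup $P_t(x,A)=\mathbb P_x(X_t\in A,\tau_\partial>t)$, acting on $L^1(\pi)$ by $P_tf(x)=\mathbb E_x[f(X_t)\mathbb 1(\tau_\partial>t)]$. A QSD is $\pi\in\mathcal P(\chi)$ with $\mathbb P_\pi(X_t\in\cdot\mid\tau_\partial>t)=\pi$ for all $t$; $\lambda(\pi)=\mathbb P_\pi(\tau_\partial>1)$. $\mathcal P_\infty(m)$ = probability measures $\ll m$ with density in $L^\infty(m)$. $\mathcal B_{b,\gg}(\chi)$ = bounded Borel functions with positive infimum. *)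

From HB Require Import structures.
From mathcomp Require Import all_boot all_order all_algebra.
From mathcomp Require Import all_classical all_reals all_analysis.
Set Implicit Arguments. Unset Strict Implicit. Unset Printing Implicit Defensive.
Import Order.TTheory GRing.Theory Num.Theory.
Import numFieldNormedType.Exports.
Local Open Scope classical_set_scope.
Local Open Scope ring_scope.

Definition pointed_at (M : choiceType) (x0 : M) : Type := M.
Section pointed_at.
Variables (M : choiceType) (x0 : M).
HB.instance Definition _ := Choice.on (pointed_at x0).
HB.instance Definition _ := isPointed.Build (pointed_at x0) x0.
End pointed_at.

Definition borel_space (R : realType) (M : metricType R) (x0 : M) :=
  g_sigma_algebraType (@open M : set (set (@pointed_at M x0))).

(* The state space chi: a metric space M (assumed nonempty, witnessed by x0,
   which is only used to equip the carrier with a point) endowed with its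
   Borel sigma-algebra (generated by the open sets of M). *)

Local Open Scope ereal_scope.

Section defs.
Variables (d : measure_display) (T : measurableType d) (R : realType).

Definition in_Pinfty (m : {measure set T -> \bar R}) (mu : set T -> \bar R) :=
  exists g : T -> R,
    [/\ measurable_fun setT g, (forall x, (0 <= g x)%R),
        (exists C : R, {ae m, forall x, (g x <= C)%R}) &
        (forall A, measurable A -> mu A = \int[m]_(x in A) (g x)%:E)].

(* Submarkovian semigroup (P_t)_{t >= 0} of a killed Markov process,
   P t x A = P_x(X_t \in A, tau_partial > t). *)
Definition submarkov_semigroup (P : R -> R.-spker T ~> T) :=
  (forall x A, measurable A -> P 0%R x A = \d_x A) /\
  (forall s t, (0 <= s)%R -> (0 <= t)%R -> forall x A, measurable A ->
     P (s + t)%R x A = \int[P s x]_y P t y A).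

Definition law_killed (P : R -> R.-spker T ~> T) (mu : set T -> \bar R)
  (t : R) (A : set T) : \bar R := \int[mu]_x P t x A.

Definition is_QSD (P : R -> R.-spker T ~> T) (pi : probability T R) :=
  forall t, (0 <= t)%R ->
    0 < law_killed P pi t setT /\
    forall A, measurable A ->
      law_killed P pi t A = law_killed P pi t setT * pi A.

Definition qsd_lambda (P : R -> R.-spker T ~> T) (pi : probability T R) : R :=
  fine (law_killed P pi 1%R setT).

End defs.

From HB Require Import structures.
From mathcomp Require Import all_boot all_order all_algebra.
From mathcomp Require Import all_classical all_reals all_analysis.
From mathcomp Require Import measurable_realfun lra.
Set Implicit Arguments. Unset Strict Implicit. Unset Printing Implicit Defensive.
Import Order.TTheory GRing.Theory Num.Theory.
Import numFieldNormedType.Exports.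
Local Open Scope classical_set_scope.
Local Open Scope ring_scope.

(* Let g be the density of pi with respect to Lam. Conditioning pi on a sublevel
   set {g <= n} charged by phi gives an initial law mu in P_infty(pi) with
   mu(phi) > 0 and mu <= K Lam. At a time t = k t0 past the convergence
   threshold for mu, the conditioned law of X_t has a pi-density at least 1/2,
   so pi <= K1 mu P_t <= K1 K Lam P_t. The duality relation, with psi bounded
   above and below, gives Lam P_t0 <= (a sup psi / inf psi) Lam, hence
   Lam P_t <= (a sup psi / inf psi)^k Lam. So pi <= K2 Lam, i.e. g is
   Lam-essentially bounded. *)

Section mbind.
Local Open Scope ereal_scope.
Context d d' (X : measurableType d) (Y : measurableType d') (R : realType).
Variables (m : {measure set X -> \bar R}) (k : R.-ker X ~> Y).

Definition mbind (B : set Y) : \bar R := \int[m]_x k x B.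

Let mbind0 : mbind set0 = 0.
Proof. by rewrite /mbind (eq_integral (cst 0)) ?integral0// => x _; rewrite measure0. Qed.

Let mbind_ge0 B : 0 <= mbind B.
Proof. exact: integral_ge0. Qed.

Let mbind_sigma_additive : semi_sigma_additive mbind.
Proof.
move=> U mU tU mUU; rewrite [X in _ --> X](_ : _ =
  \int[m]_x (\sum_(n <oo) k x (U n))); last first.
  apply: eq_integral => x _.
  by apply/esym/cvg_lim => //; exact/measure_semi_sigma_additive.
apply/cvg_closeP; split.
  by apply: is_cvg_nneseries => n _ _; exact: integral_ge0.
by rewrite closeE// integral_nneseries// => n; exact: measurable_kernel.
Qed.

HB.instance Definition _ := isMeasure.Build _ _ R
  mbind mbind0 mbind_ge0 mbind_sigma_additive.

Import HBNNSimple.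

Let integral_mbind_nnsfun (s : {nnsfun Y >-> R}) :
  \int[mbind]_y (s y)%:E = \int[m]_x \int[k x]_y (s y)%:E.
Proof.
have kpre_ge0 x r : 0 <= r%:E * k x (s @^-1` [set r]).
  by apply: (mulemu_ge0 (fun r => s @^-1` [set r])) => r0; rewrite preimage_nnfun0.
under [RHS]eq_integral do rewrite integralT_nnsfun sintegralE.
rewrite integralT_nnsfun sintegralE ge0_integral_fsum//; last first.
  by move=> r; apply/measurable_funeM/measurable_kernel.
apply: eq_fsbigr => r /[!inE] -[y _ <-].
by rewrite ge0_integralZl ?lee_fin//; exact/measurable_kernel/measurable_funPTI.
Qed.

Lemma integral_mbind (f : Y -> \bar R) : (forall y, 0 <= f y) ->
  measurable_fun [set: Y] f -> \int[mbind]_y f y = \int[m]_x \int[k x]_y f y.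
Proof.
move=> f0 mf; pose s := nnsfun_approx measurableT mf.
have fE (mu : {measure set Y -> \bar R}) :
    \int[mu]_y f y = limn (fun n => \int[mu]_y (s n y)%:E).
  transitivity (\int[mu]_y limn (fun n => (s n y)%:E)).
    by apply: eq_integral => y _; apply/esym/cvg_lim => //; exact: cvg_nnsfun_approx.
  rewrite monotone_convergence//.
  - by move=> n; exact/measurable_EFinP.
  - by move=> n y _; rewrite lee_fin.
  - by move=> y _ a b ab; rewrite lee_fin; exact/lefP/nd_nnsfun_approx.
under [RHS]eq_integral do rewrite fE.
rewrite fE monotone_convergence//; last 3 first.
- move=> n; apply: measurable_fun_integral_kernel => //.
  + by move=> U mU; exact: measurable_kernel.
  + by move=> y; rewrite lee_fin.
  + exact/measurable_EFinP.
- by move=> n x _; apply: integral_ge0 => y _; rewrite lee_fin.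
- move=> x _ a b ab; apply: ge0_le_integral => //.
  + by move=> y _; rewrite lee_fin.
  + exact/measurable_EFinP.
  + exact/measurable_EFinP.
  + by move=> y _; rewrite lee_fin; exact/lefP/nd_nnsfun_approx.
by congr (limn _); apply/funext => n; exact: integral_mbind_nnsfun.
Qed.

End mbind.

Lemma ge0_le_measure_integralZ d (T : measurableType d) (R : realType)
    (m1 m2 : {measure set T -> \bar R}) (K : R) : (0 <= K)%R ->
  (forall B, measurable B -> (m1 B <= K%:E * m2 B)%E) ->
  forall f : T -> \bar R, (forall x, (0 <= f x)%E) -> measurable_fun [set: T] f ->
  (\int[m1]_x f x <= K%:E * \int[m2]_x f x)%E.
Proof.
move=> K0 m12 f f0 mf.
rewrite -(ge0_integral_mscale m2 measurableT (NngNum K0) mf)//.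
exact: ge0_le_measure_integral.
Qed.

Section dominated_by.
Local Open Scope ereal_scope.
Context d (T : measurableType d) (R : realType).

Definition dominated_by (m1 m2 : set T -> \bar R) :=
  exists2 K : R, (0 <= K)%R & forall A, measurable A -> m1 A <= K%:E * m2 A.

Lemma dominated_by_trans (m1 m2 m3 : set T -> \bar R) :
  dominated_by m1 m2 -> dominated_by m2 m3 -> dominated_by m1 m3.
Proof.
move=> [K1 K1_ge0 m12] [K2 K2_ge0 m23]; exists (K1 * K2)%R; first exact: mulr_ge0.
move=> A mA; rewrite EFinM -muleA; apply: le_trans (m12 _ mA) _.
by apply: lee_wpmul2l; [rewrite lee_fin | exact: m23].
Qed.

End dominated_by.

Section law_killed.
Local Open Scope ereal_scope.
Context d (T : measurableType d) (R : realType).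
Variable P : R -> R.-spker T ~> T.

Lemma law_killed_le (m1 m2 : {measure set T -> \bar R}) (K t : R) : (0 <= K)%R ->
  (forall B, measurable B -> m1 B <= K%:E * m2 B) ->
  forall A, measurable A -> law_killed P m1 t A <= K%:E * law_killed P m2 t A.
Proof.
move=> K0 m12 A mA.
exact: ge0_le_measure_integralZ K0 m12 _ (fun=> measure_ge0 _ _) (measurable_kernel _ _ mA).
Qed.

Lemma law_killed_dominated (m1 m2 : {measure set T -> \bar R}) t :
  dominated_by m1 m2 -> dominated_by (law_killed P m1 t) (law_killed P m2 t).
Proof. by case=> K K_ge0 m12; exists K => // A mA; exact: law_killed_le. Qed.

Lemma law_killed_setT_fin_num (mu : probability T R) t :
  law_killed P mu t setT \is a fin_num.
Proof.
rewrite ge0_fin_numE ?integral_ge0// (@le_lt_trans _ _ 1) ?ltey//.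
apply: (@le_trans _ _ (\int[mu]_x cst 1 x)).
  apply: ge0_le_integral => //; first exact: measurable_kernel.
  by move=> x _; exact: sprob_kernel_le1.
by rewrite integral_cst// mul1e; exact: probability_le1.
Qed.

Hypothesis HP : submarkov_semigroup P.

Lemma law_killed0 (m : {measure set T -> \bar R}) A : measurable A ->
  law_killed P m 0 A = m A.
Proof.
move=> mA; transitivity (\int[m]_x (\1_A x)%:E); last by rewrite integral_indic// setIT.
by apply: eq_integral => x _; rewrite HP.1// diracE indicE.
Qed.

Lemma law_killedD (m : {measure set T -> \bar R}) s t A :
  (0 <= s)%R -> (0 <= t)%R -> measurable A ->
  law_killed P m (s + t) A = law_killed P (mbind m (P s)) t A.
Proof.
move=> s0 t0 mA; rewrite /law_killed integral_mbind//; last exact: measurable_kernel.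
by apply: eq_integral => x _; rewrite HP.2.
Qed.

Lemma law_killed_geometric (m : {measure set T -> \bar R}) (t0 K : R) :
  (0 <= t0)%R -> (0 <= K)%R ->
  (forall B, measurable B -> law_killed P m t0 B <= K%:E * m B) ->
  forall (k : nat) A, measurable A ->
  law_killed P m (k%:R * t0) A <= (K ^+ k)%:E * m A.
Proof.
move=> t00 K0 mt0; elim=> [|k IH] A mA; first by rewrite mul0r law_killed0// mul1e.
rewrite -addn1 natrD mulrDl mul1r addrC law_killedD ?mulr_ge0//.
apply: le_trans (law_killed_le (m1 := mbind m (P t0)) _ K0 mt0 mA) _.
by rewrite addn1 exprS EFinM -muleA lee_wpmul2l ?lee_fin//; exact: IH.
Qed.

End law_killed.

Section reversible.
Local Open Scope ereal_scope.
Context d (T : measurableType d) (R : realType).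
Variables (Lam : {measure set T -> \bar R}) (k : R.-ker T ~> T) (Q : R.-spker T ~> T).
Variables (psi : T -> R) (a c C : R).
Hypotheses (mpsi : measurable_fun setT psi) (c0 : (0 < c)%R) (a0 : (0 < a)%R).
Hypothesis psi_bd : forall x, (c <= psi x <= C)%R.
Hypothesis rev : forall D : set (T * T), measurable D ->
  \int[Lam]_x ((psi x)%:E * \int[k x]_y (\1_D (x, y))%:E)
  = a%:E * \int[Lam]_y ((psi y)%:E * \int[Q y]_x (\1_D (x, y))%:E).

Lemma reversible_setTX B : measurable B ->
  \int[Lam]_x ((psi x)%:E * k x B)
  = a%:E * \int[Lam]_y ((psi y)%:E * ((\1_B y)%:E * Q y setT)).
Proof.
move=> mB.
have indicB x y : \1_(setT `*` B) (x, y) = \1_B y :> R by rewrite !indicE in_setX in_setT.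
have := rev (measurableX measurableT mB).
under eq_integral => x _ do under eq_integral => y _ do rewrite indicB.
under [in X in _ = X -> _]eq_integral => y _.
  under eq_integral => x _ do rewrite indicB.
  rewrite integral_cst//.
  over.
by move=> <-; apply: eq_integral => x _; rewrite integral_indic// setIT.
Qed.

Lemma reversible_integral_le B : measurable B ->
  \int[Lam]_x k x B <= (a * C / c)%:E * Lam B.
Proof.
move=> mB.
have psi0 x : (0 <= psi x)%R by have /andP[+ _] := psi_bd x; exact/le_trans/ltW.
have lower : \int[Lam]_x k x B <= (c^-1)%:E * \int[Lam]_x ((psi x)%:E * k x B).
  rewrite -ge0_integralZl//; last 3 first.
  - by apply: emeasurable_funM; [exact/measurable_EFinP | exact: measurable_kernel].
  - by move=> x _; rewrite mule_ge0 ?lee_fin.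
  - by rewrite lee_fin invr_ge0 ltW.
  apply: ge0_le_integral => //.
  - exact: measurable_kernel.
  - apply: emeasurable_funM; first exact: measurable_cst.
    by apply: emeasurable_funM; [exact/measurable_EFinP | exact: measurable_kernel].
  move=> x _; rewrite muleA -EFinM -[X in X <= _]mul1e lee_wpmul2r// lee_fin.
  by rewrite mulrC ler_pdivlMr// mul1r; have /andP[] := psi_bd x.
have upper : \int[Lam]_y ((psi y)%:E * ((\1_B y)%:E * Q y setT)) <= C%:E * Lam B.
  have -> : Lam B = \int[Lam]_y (\1_B y)%:E by rewrite integral_indic// setIT.
  rewrite -ge0_integralZl//; last 2 first.
  - exact/measurable_EFinP/measurable_indic.
  - by rewrite lee_fin (le_trans (psi0 point)); have /andP[] := psi_bd point.
  apply: ge0_le_integral => //.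
  - by move=> y _; rewrite !mule_ge0 ?lee_fin.
  - apply: emeasurable_funM; first exact/measurable_EFinP.
    apply: emeasurable_funM; first exact/measurable_EFinP/measurable_indic.
    exact: measurable_kernel.
  - by apply: emeasurable_funM; [exact: measurable_cst | exact/measurable_EFinP/measurable_indic].
  move=> y _; apply: lee_pmul; rewrite ?lee_fin ?mule_ge0 ?lee_fin//.
    by have /andP[] := psi_bd y.
  by rewrite -[X in _ <= X]mule1 lee_wpmul2l ?lee_fin//; exact: sprob_kernel_le1.
apply: (le_trans lower); rewrite reversible_setTX// muleA -EFinM.
have -> : (a * C / c = c^-1 * a * C)%R by rewrite mulrC mulrA.
by rewrite [in X in _ <= X]EFinM -muleA lee_wpmul2l// lee_fin mulr_ge0 ?invr_ge0 ?ltW.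
Qed.

End reversible.

Section radon_nikodym_density.
Local Open Scope ereal_scope.
Context d (T : measurableType d) (R : realType).
Variables (Lam : {measure set T -> \bar R}) (Lam_sf : sigma_finite setT Lam).

(* A copy of Lam carrying the sigma-finite structure that Radon-Nikodym needs. *)
Let sfLam : set T -> \bar R := Lam.
HB.instance Definition _ := Measure.on sfLam.
HB.instance Definition _ := Measure_isSigmaFinite.Build _ _ _ sfLam Lam_sf.

Lemma radon_nikodym_density (pi : probability T R) : pi `<< Lam ->
  exists g : T -> R, [/\ measurable_fun setT g, (forall x, (0 <= g x)%R) &
    forall A, measurable A -> pi A = \int[Lam]_(x in A) (g x)%:E].
Proof.
move=> piLam.
have [f [f0 ffin fint fA]] := radon_nikodym_sigma_finite (mu := sfLam) piLam.
exists (fine \o f); split.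
- by apply: measurableT_comp => //; exact: measurable_int fint.
- by move=> x; rewrite /= fine_ge0.
- by move=> A mA; rewrite fA//; apply: eq_integral => x _; rewrite /= fineK.
Qed.

End radon_nikodym_density.

Section level_sets.
Local Open Scope ereal_scope.
Context d (T : measurableType d) (R : realType) (mu : {measure set T -> \bar R}).

Lemma exists_sublevel_integral_gt0 (g : T -> R) (f : T -> \bar R) :
  measurable_fun setT g -> (forall x, 0 <= f x) -> measurable_fun setT f ->
  0 < \int[mu]_x f x -> exists n : nat, 0 < \int[mu]_(x in g @^-1` `]-oo, n%:R]) f x.
Proof.
move=> mg f0 mf; apply: contraPP => /forallNP Fn0.
pose F n : set T := g @^-1` `]-oo, n%:R].
have mF n : measurable (F n) by rewrite -[F n]setTI; exact: mg.
have ndF : nondecreasing_seq F.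
  move=> m n mn; rewrite subsetEset => x; rewrite /F /= !in_itv /= => /le_trans; apply.
  by rewrite ler_nat.
have UF : \bigcup_n F n = setT.
  apply/seteqP; split => // x _; exists (Num.bound `|g x|) => //.
  by rewrite /F /= in_itv /= (le_trans (ler_norm _))// ltW// archi_boundP.
have := ge0_nondecreasing_set_cvg_integral ndF mF
  (fun _ => measurable_funS measurableT (@subsetT _ _) mf) (fun _ x _ => f0 x).
rewrite UF => /(_ mu) Fcvg; apply/negP; rewrite -leNgt -(cvg_lim _ Fcvg)//.
apply: lime_le; first exact: cvgP Fcvg.
by apply: nearW => n; rewrite leNgt; exact/negP/Fn0.
Qed.

Lemma integral_gt0_measure_gt0 (S : set T) (f : T -> \bar R) :
  measurable S -> measurable_fun S f -> 0 < \int[mu]_(x in S) f x -> 0 < mu S.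
Proof.
move=> mS mf If; rewrite lt0e measure_ge0 andbT; apply/eqP => S0.
by move: If; rewrite null_set_integral// ltxx.
Qed.

End level_sets.

Lemma mnormalizeE d (T : measurableType d) (R : realType)
    (mu : {measure set T -> \bar R}) (P : probability T R) A :
  (0 < mu setT < +oo)%E -> mnormalize mu P A = (mu A * ((fine (mu setT))^-1)%:E)%E.
Proof. by case/andP => mu_gt0 mu_lty; rewrite /mnormalize gt_eqF// lt_eqF. Qed.

Section mcond.
Local Open Scope ereal_scope.
Context d (T : measurableType d) (R : realType).
Variables (pi : probability T R) (S : set T) (mS : measurable S).

(* pi conditioned on S; when pi S = 0, mnormalize falls back to pi itself. *)
Definition mcond : probability T R := mnormalize (mrestr pi mS) pi.

Hypothesis piS_gt0 : 0 < pi S.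

Let z := fine (pi S).
Let piSE : pi S = z%:E.
Proof. by rewrite /z fineK// ge0_fin_numE// (le_lt_trans (probability_le1 _ _)) ?ltey. Qed.
Let z_gt0 : (0 < z)%R. Proof. by rewrite -lte_fin -piSE. Qed.

Lemma mcondE A : measurable A -> mcond A = pi (A `&` S) * ((fine (pi S))^-1)%:E.
Proof.
have rS : (mrestr pi mS : {measure set T -> \bar R}) setT = pi S :=
  congr1 pi (setTI S).
move=> mA; transitivity (mnormalize (mrestr pi mS) pi A) => //.
by rewrite mnormalizeE rS// piSE lte_fin z_gt0 ltry.
Qed.

Lemma mcond_Pinfty : in_Pinfty pi mcond.
Proof.
exists (fun x => \1_S x * z^-1)%R; split.
- by apply: measurable_funM => //; exact: measurable_indic.
- by move=> x; rewrite mulr_ge0// invr_ge0 ltW.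
- exists z^-1%R; apply: aeW => x; rewrite indicE.
  by case: (x \in S); rewrite ?mul1r ?mul0r ?lexx// invr_ge0 ltW.
- move=> A mA; rewrite mcondE//.
  under eq_integral do rewrite EFinM.
  rewrite ge0_integralZr//; last 2 first.
  + by apply/measurable_funTS/measurable_EFinP; exact: measurable_indic.
  + by rewrite lee_fin invr_ge0 ltW.
  by rewrite integral_indic// setIC.
Qed.

Lemma mcond_integral_gt0 (f : T -> \bar R) : (forall x, 0 <= f x) ->
  measurable_fun setT f -> 0 < \int[pi]_(x in S) f x -> 0 < \int[mcond]_x f x.
Proof.
move=> f0 mf; set zmcond := mscale (NngNum (ltW z_gt0)) mcond.
have -> : \int[pi]_(x in S) f x = \int[zmcond]_(x in S) f x.
  apply: eq_measure_integral => A mA AS; transitivity (z%:E * mcond A) => //.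
  by rewrite mcondE// (setIidl AS) muleCA -EFinM divff ?gt_eqF// mule1.
have Sle : \int[zmcond]_(x in S) f x <= z%:E * \int[mcond]_x f x.
  rewrite -(ge0_integral_mscale mcond measurableT (NngNum (ltW z_gt0)) mf)//.
  exact: ge0_subset_integral.
move=> /lt_le_trans/(_ Sle).
by rewrite pmule_rgt0 ?lte_fin.
Qed.

Lemma mcond_le (Lam : {measure set T -> \bar R}) (g : T -> R) (n : R) :
  measurable_fun setT g -> (forall x, (0 <= g x)%R) ->
  (forall A, measurable A -> pi A = \int[Lam]_(x in A) (g x)%:E) ->
  (forall x, S x -> (g x <= n)%R) -> (0 <= n)%R ->
  forall B, measurable B -> mcond B <= (n / fine (pi S))%:E * Lam B.
Proof.
move=> mg g0 gA gn n0 B mB; have mBS := measurableI _ _ mB mS.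
rewrite mcondE// (gA _ mBS) EFinM muleAC.
apply: lee_wpmul2r; first by rewrite lee_fin invr_ge0 ltW.
apply: (@le_trans _ _ (n%:E * Lam (B `&` S))).
  rewrite -(integral_cst Lam mBS); apply: ge0_le_integral => //.
  - by move=> x _; rewrite lee_fin.
  - by apply/measurable_funTS/measurable_EFinP.
  - by move=> x [_ Sx]; rewrite lee_fin gn.
apply: lee_wpmul2l; first by rewrite lee_fin.
by apply: le_measure; rewrite ?inE//; exact: subIsetl.
Qed.

End mcond.

Lemma exists_conditioning_dominated d (T : measurableType d) (R : realType)
    (Lam : {measure set T -> \bar R}) (pi : probability T R) (g : T -> R)
    (f : T -> \bar R) :
  measurable_fun setT g -> (forall x, (0 <= g x)%R) ->
  (forall A, measurable A -> (pi A = \int[Lam]_(x in A) (g x)%:E)%E) ->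
  (forall x, (0 <= f x)%E) -> measurable_fun setT f -> (0 < \int[pi]_x f x)%E ->
  exists mu : probability T R,
    [/\ in_Pinfty pi mu, (0 < \int[mu]_x f x)%E & dominated_by mu Lam].
Proof.
move=> mg g0 gA f0 mf If.
have [n Sf] := exists_sublevel_integral_gt0 mg f0 mf If.
set S := g @^-1` `]-oo, n%:R] in Sf.
have mS : measurable S by rewrite -[S]setTI; exact: mg.
have piS := integral_gt0_measure_gt0 mS (measurable_funTS mf) Sf.
exists (mcond pi mS); split.
- exact: mcond_Pinfty.
- exact: mcond_integral_gt0.
exists (n%:R / fine (pi S))%R; first by rewrite divr_ge0// fine_ge0// ltW.
by apply: (mcond_le mS piS mg g0 gA).
Qed.

Section density_bounds.
Local Open Scope ereal_scope.
Context d (T : measurableType d) (R : realType).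

Lemma dominated_by_of_density_ge (pi : {measure set T -> \bar R}) (nu : set T -> \bar R)
    (N : \bar R) (c : R) (h : T -> R) :
  0 < N -> N \is a fin_num -> (0 < c)%R -> measurable_fun setT h ->
  (forall A, measurable A -> nu A = N * \int[pi]_(x in A) (h x)%:E) ->
  {ae pi, forall x, (c <= h x)%R} -> dominated_by pi nu.
Proof.
move=> N_gt0 Nfin c0 mh nuE hc; set r := fine N.
have NE : N = r%:E by rewrite fineK.
have r0 : (0 < r)%R by rewrite -lte_fin -NE.
exists (r * c)^-1%R; first by rewrite invr_ge0 mulr_ge0// ltW.
move=> A mA.
have mh0 : measurable_fun setT (fun x => (Num.max (h x) 0)%:E).
  exact/measurable_EFinP/measurable_maxr.
(* h may be negative on a pi-null set: integrate its positive part instead. *)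
have hpos : \int[pi]_(x in A) (h x)%:E = \int[pi]_(x in A) (Num.max (h x) 0)%:E.
  apply: ae_eq_integral => //.
  - exact/measurable_funTS/measurable_EFinP.
  - exact: measurable_funTS.
  - apply: filterS hc => x hx _; congr EFin.
    by rewrite max_l// (le_trans (ltW c0)).
have cA : c%:E * pi A <= \int[pi]_(x in A) (h x)%:E.
  rewrite -integral_cst// hpos; apply: ae_ge0_le_integral => //.
  - by move=> x _; rewrite lee_fin ltW.
  - by move=> x _; rewrite lee_fin le_max lexx orbT.
  - exact: measurable_funTS.
  - by apply: filterS hc => x hx _; rewrite lee_fin le_max hx.
rewrite nuE// NE muleA -EFinM invfM mulrAC mulVf ?gt_eqF// mul1r.
apply: (@le_trans _ _ ((c^-1)%:E * (c%:E * pi A))).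
  by rewrite muleA -EFinM mulVf ?gt_eqF// mul1e.
by rewrite lee_wpmul2l// lee_fin invr_ge0 ltW.
Qed.

Lemma in_Pinfty_of_dominated (Lam : {measure set T -> \bar R}) (pi : probability T R)
    (g : T -> R) :
  measurable_fun setT g -> (forall x, (0 <= g x)%R) ->
  (forall A, measurable A -> pi A = \int[Lam]_(x in A) (g x)%:E) ->
  dominated_by pi Lam -> in_Pinfty Lam pi.
Proof.
move=> mg g0 gA [K K0 piK]; exists g; split => //; exists (K + 1)%R.
pose N := g @^-1` `](K + 1)%R, +oo[.
have mN : measurable N by rewrite -[N]setTI; exact: mg.
exists N; split => //; last first.
  move=> x /= gx; rewrite /N /preimage /= in_itv /= andbT ltNge.
  exact/negP.
have NK1 : (K + 1)%:E * Lam N <= pi N.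
  rewrite -(integral_cst Lam mN) gA//; apply: ge0_le_integral => //.
  - by move=> x _; rewrite lee_fin addr_ge0.
  - exact/measurable_funTS/measurable_EFinP.
  - by move=> x; rewrite /N /preimage /= in_itv /= andbT lee_fin => /ltW.
have NK := le_trans NK1 (piK N mN).
have LN0 : 0 <= Lam N := measure_ge0 Lam N.
move: LN0 NK1 NK; case: (Lam N) => [l| |]// l0.
- rewrite !lee_fin mulrDl mul1r gerDl => _ l_le0.
  by apply/eqP; rewrite eq_le lee_fin l_le0 l0.
- move=> /le_trans/(_ (probability_le1 pi mN)) + _.
  by rewrite gt0_muley ?lte_fin ?ltr_wpDl// leye_eq.
Qed.

End density_bounds.

Lemma exists_natmul_ge (R : realType) (x y : R) : 0 < y -> exists k : nat, x <= k%:R * y.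
Proof.
move=> y_gt0; exists (Num.bound (`|x| / y)); rewrite -ler_pdivrMr//.
apply: le_trans (ltW (archi_boundP _)); last by rewrite divr_ge0// ltW.
by rewrite ler_pM2r ?invr_gt0// ler_norm.
Qed.

Theorem mainTheorem8 (R : realType) (M : metricType R) (x0 : M)
  (Lam : {measure set (borel_space x0) -> \bar R})
  (HLam_sfin : sigma_finite setT Lam)
  (HLam_supp : forall U : set M, open U -> U !=set0 -> (0 < Lam U)%E)
  (P : R -> R.-spker (borel_space x0) ~> (borel_space x0))
  (HP : submarkov_semigroup P)
  (psi : borel_space x0 -> R) (t0 a : R)
  (Ptilde : R.-spker (borel_space x0) ~> (borel_space x0))
  (Hpsi_meas : measurable_fun setT psi)
  (Hpsi_bd : exists c C : R, 0 < c /\ forall x, c <= psi x <= C)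
  (Ht0 : 0 < t0) (Ha : 0 < a)
  (Hrev : forall C : set (borel_space x0 * borel_space x0),
     measurable C ->
     (\int[Lam]_x ((psi x)%:E * \int[P t0 x]_y (\1_C (x, y))%:E)
      = a%:E * \int[Lam]_y ((psi y)%:E * \int[Ptilde y]_x (\1_C (x, y))%:E))%E)
  (pi : probability (borel_space x0) R)
  (Hqsd : is_QSD P pi)
  (Hpi_ac : pi `<< Lam)
  (phi : borel_space x0 -> R)
  (Hphi_meas : measurable_fun setT phi)
  (Hphi_ge0 : forall x, 0 <= phi x)
  (Hphi_int : pi.-integrable setT (fun x => (phi x)%:E))
  (Hphi_eig : forall t, 0 <= t ->
     {ae pi, forall x, (\int[P t x]_y (phi y)%:E
                       = ((qsd_lambda P pi `^ t) * phi x)%:E)%E})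
  (Hphi_norm : (\int[pi]_x (phi x)%:E = 1)%E)
  (Hconv : forall mu : probability (borel_space x0) R,
     in_Pinfty pi mu ->
     (0 < \int[mu]_x (phi x)%:E)%E ->
     forall eps : R, 0 < eps ->
     exists T0 : R, forall t, 0 <= t -> T0 <= t ->
       (0 < law_killed P mu t setT)%E /\
       exists h : borel_space x0 -> R,
         [/\ measurable_fun setT h,
             (forall A, measurable A ->
                law_killed P mu t A
                = (law_killed P mu t setT * \int[pi]_(x in A) (h x)%:E)%E) &
             {ae pi, forall x, `|h x - 1| <= eps}]) :
  in_Pinfty Lam pi.
Proof.
have [g [mg g0 gA]] := radon_nikodym_density HLam_sfin Hpi_ac.
have [mu [mu_Pinfty mu_phi mu_Lam]] : exists mu : probability _ R,
    [/\ in_Pinfty pi mu, (0 < \int[mu]_x (phi x)%:E)%E & dominated_by mu Lam].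
  apply: exists_conditioning_dominated mg g0 gA _ _ _ => //.
    exact/measurable_EFinP.
  by rewrite Hphi_norm.
have half_gt0 : 0 < 2^-1 :> R by rewrite invr_gt0.
have [T0 conv] := Hconv mu mu_Pinfty mu_phi _ half_gt0.
have [k T0k] := exists_natmul_ge T0 Ht0.
have [mut_gt0 [h [mh hA h_ae]]] := conv _ (mulr_ge0 (ler0n _ k) (ltW Ht0)) T0k.
have h_ge : {ae pi, forall x, 2^-1 <= h x}.
  by apply: filterS h_ae => x; rewrite ler_norml => /andP[hx _]; lra.
apply: (in_Pinfty_of_dominated mg g0 gA).
apply: (dominated_by_trans (dominated_by_of_density_ge mut_gt0
  (law_killed_setT_fin_num _ _ _) half_gt0 mh hA h_ge)).
apply: (dominated_by_trans (law_killed_dominated P _ mu_Lam)).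
have [c [C [c0 psi_bd]]] := Hpsi_bd.
have /andP[cp pC] := psi_bd point.
have C0 : 0 <= C := le_trans (ltW c0) (le_trans cp pC).
have K0 : 0 <= a * C / c by rewrite divr_ge0 ?mulr_ge0// ltW.
exists ((a * C / c) ^+ k); first exact: exprn_ge0.
have Lam_t0 := reversible_integral_le (k := P t0) Hpsi_meas c0 Ha psi_bd Hrev.
exact: (law_killed_geometric (m := Lam) HP (ltW Ht0) K0 Lam_t0 k).
Qed.
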